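(* For any geodetic simple connected graph $G$ with at least one edge, $src(G)=\chi'(G)$. Moreover, an edge coloring $f$ of $G$ strongly rainbow connects $G$ if and only if $f$ is a proper coloring of the vertices of $H(G)$.
   Context: A graph is geodetic if every pair of distinct vertices is joined by a unique shortest path. An edge coloring of $G$ is any function $f:E(G)\to\{1,\dots,k\}$, $k\in\mathbb{N}$ (adjacent edges may share a color). A path is rainbow with respect to $f$ if its edges receive pairwise distinct colors. $f$ strongly rainbow connects $G$ if for every pair of distinct vertices $u,v$ there is a shortest $(u,v)$-path that is rainbow; $src(G)$ is the minimum $k$ for which such an $f$ exists. For distinct $u_1,u_2\in V(G)$, an edge $e$ separates $u_1,u_2$ if $e$ lies on every shortest $(u_1,u_2)$-path. The auxiliary graph $H(G)$ has vertex set $E(G)$, and distinct $e_1,e_2$ are adjacent in $H(G)$ iff some pair of distinct vertices of $G$ is separated by both $e_1$ and $e_2$. $\chi'(G)=\chi(H(G))$. An edge coloring of $G$ is regarded as a coloring of the vertices of $H(G)$ since $V(H(G))=E(G)$. *)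

From mathcomp Require Import all_boot.
From mathcomp Require Import boolp.
Set Implicit Arguments. Unset Strict Implicit. Unset Printing Implicit Defensive.

Section Graph.
Variable T : finType.
Variable g : rel T.

Definition simple_graph := symmetric g /\ irreflexive g.
Definition connected_graph := forall x y : T, connect g x y.

Definition edges : {set {set T}} :=
  [set [set x; y] | x in T, y in T & g x y].

(* a walk from x to y: the vertex sequence x :: p; its length is size p *)
Definition is_walk (x y : T) (p : seq T) : bool := path g x p && (last x p == y).

Definition shortest (x y : T) (p : seq T) : Prop :=
  is_walk x y p /\ forall q, is_walk x y q -> size p <= size q.

Definition geodetic : Prop :=
  forall u v : T, u != v -> exists! p, shortest u v p.

Definition path_edges (x : T) (p : seq T) : seq {set T} :=
  pairmap (fun a b => [set a; b]) x p.

Definition rainbow (f : {set T} -> nat) (x : T) (p : seq T) : bool :=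
  uniq (map f (path_edges x p)).

Definition strongly_rainbow_connects (f : {set T} -> nat) : Prop :=
  forall u v : T, u != v -> exists p, shortest u v p /\ rainbow f u p.

Definition edge_coloring (k : nat) (f : {set T} -> nat) : Prop :=
  forall e, e \in edges -> 0 < f e <= k.

Definition src_colorable (k : nat) : Prop :=
  exists f, edge_coloring k f /\ strongly_rainbow_connects f.

Definition separates (e : {set T}) (u1 u2 : T) : Prop :=
  forall p, shortest u1 u2 p -> e \in path_edges u1 p.

(* adjacency in the auxiliary graph H(G), whose vertex set is edges *)
Definition H_adj (e1 e2 : {set T}) : Prop :=
  e1 \in edges /\ e2 \in edges /\ e1 != e2 /\
  exists u1 u2 : T, u1 != u2 /\ separates e1 u1 u2 /\ separates e2 u1 u2.

Definition proper_H (f : {set T} -> nat) : Prop :=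
  forall e1 e2, H_adj e1 e2 -> f e1 != f e2.

Definition H_colorable (k : nat) : Prop :=
  exists f, edge_coloring k f /\ proper_H f.

(* minimum k with property P (0 if none exists) *)
Definition min_nat (P : nat -> Prop) : nat :=
  match pselect (exists k, `[< P k >]) with
  | left H => ex_minn H
  | right _ => 0
  end.

Definition src : nat := min_nat src_colorable.
Definition chi_H : nat := min_nat H_colorable.   (* chi'(G) = chi(H(G)) *)

End Graph.

From mathcomp Require Import all_boot.
From mathcomp Require Import boolp.
Set Implicit Arguments. Unset Strict Implicit. Unset Printing Implicit Defensive.

(* A shortest walk never repeats a vertex, so its edges are pairwise distinct.
   If a colouring f strongly rainbow connects G and e1, e2 both separate u1, u2,
   they lie on a rainbow shortest (u1,u2)-path and thus get different colours.
   Conversely, in a geodetic graph every edge of the unique shortest (u,v)-path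
   separates u and v, so any two of its edges are adjacent in H(G), and a proper
   colouring of H(G) makes that path rainbow.  The two notions of colouring thus
   coincide for every k, and so do their minima src(G) and chi'(G). *)

Lemma uniq_map_inj_in (T1 T2 : eqType) (f : T1 -> T2) (s : seq T1) :
  uniq (map f s) -> {in s &, injective f}.
Proof.
elim: s => [|c s IH] //= /andP [fc_notin uniq_fs] a b.
rewrite !inE => /orP [/eqP -> | a_in] /orP [/eqP -> | b_in] //.
- by move=> fcb; move: fc_notin; rewrite fcb map_f.
- by move=> fac; move: fc_notin; rewrite -fac map_f.
- exact: IH.
Qed.

Lemma size_shorten (T : eqType) (x : T) (p : seq T) : size (shorten x p) <= size p.
Proof.
elim: p x => [|y p IH] x //=.
by case: ifP => _ /=; [exact: leqW (IH x) | exact: IH y].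
Qed.

Lemma shorten_size_uniq (T : eqType) (x : T) (p : seq T) :
  size (shorten x p) = size p -> uniq (x :: p).
Proof.
elim: p x => [|y p IH] x //=.
case: ifP => [_ size_eq | _ [/IH uniq_yp]]; last exact: uniq_yp.
by move: (size_shorten x p); rewrite size_eq ltnn.
Qed.

Section PathEdges.
Variable T : finType.

Lemma mem_path_edges (x : T) (p : seq T) e :
  e \in path_edges x p -> {subset e <= x :: p}.
Proof.
elim: p x => [|y p IH] x //=; rewrite inE => /orP [/eqP -> | e_in] z.
  by rewrite !inE => /orP [] ->; rewrite ?orbT.
by move=> /(IH _ e_in) z_in; rewrite inE z_in orbT.
Qed.

Lemma uniq_path_edges (x : T) (p : seq T) :
  uniq (x :: p) -> uniq (path_edges x p).
Proof.
elim: p x => [|y p IH] x //= /andP [x_notin uniq_yp].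
rewrite IH // andbT; apply/negP => /mem_path_edges /(_ x).
by rewrite !inE eqxx => /(_ isT); apply/negP.
Qed.

Variable g : rel T.

Lemma path_edges_sub_edges (x : T) (p : seq T) :
  path g x p -> {subset path_edges x p <= edges g}.
Proof.
elim: p x => [|y p IH] x //= /andP [gxy p_path] e.
rewrite inE => /orP [/eqP -> | e_in]; last exact: IH e_in.
by apply/imset2P; exists x y; rewrite ?inE.
Qed.

(* Shortening a shortest walk keeps it a walk and cannot make it shorter. *)
Lemma shortest_uniq (u v : T) (p : seq T) : shortest g u v p -> uniq (u :: p).
Proof.
move=> [/andP [p_path /eqP p_last] p_min].
apply: shorten_size_uniq; apply/eqP; rewrite eqn_leq size_shorten /=.
case: (shortenP p_path) p_last => q q_path _ _ q_last.
by apply: p_min; rewrite /is_walk q_path q_last eqxx.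
Qed.

End PathEdges.

Section Colorings.
Variables (T : finType) (g : rel T).

Lemma strongly_rainbow_connects_proper_H (f : {set T} -> nat) :
  strongly_rainbow_connects g f -> proper_H g f.
Proof.
move=> src_f e1 e2 [_ [_ [e12 [u1 [u2 [u12 [sep1 sep2]]]]]]].
have [p [p_shortest p_rainbow]] := src_f _ _ u12.
apply/eqP => /(uniq_map_inj_in p_rainbow (sep1 _ p_shortest) (sep2 _ p_shortest)).
exact/eqP.
Qed.

Hypothesis geo : geodetic g.

Lemma geodesic_edge_separates (u v : T) (p : seq T) e :
  u != v -> shortest g u v p -> e \in path_edges u p -> separates g e u v.
Proof.
move=> uv p_shortest e_in q q_shortest.
have [p0 [_ p0_unique]] := geo uv.
by rewrite -(p0_unique _ q_shortest) (p0_unique _ p_shortest).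
Qed.

Lemma proper_H_strongly_rainbow_connects (f : {set T} -> nat) :
  proper_H g f -> strongly_rainbow_connects g f.
Proof.
move=> proper_f u v uv.
have [p [p_shortest _]] := geo uv.
exists p; split=> //.
have p_path : path g u p by case: p_shortest => /andP [].
rewrite /rainbow map_inj_in_uniq; first exact/uniq_path_edges/(shortest_uniq p_shortest).
move=> e1 e2 e1_in e2_in; apply: contra_eq => e12; apply: proper_f.
have in_edges := path_edges_sub_edges p_path.
have sep e : e \in path_edges u p -> separates g e u v.
  exact: geodesic_edge_separates uv p_shortest.
split; [exact: in_edges | split; [exact: in_edges | split=> //]].
by exists u, v; split=> //; split; [exact: sep e1_in | exact: sep e2_in].
Qed.

Lemma strongly_rainbow_connectsE (f : {set T} -> nat) :
  strongly_rainbow_connects g f <-> proper_H g f.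
Proof.
split; [exact: strongly_rainbow_connects_proper_H
       | exact: proper_H_strongly_rainbow_connects].
Qed.

End Colorings.

Lemma eq_min_nat (P Q : nat -> Prop) : (forall k, P k <-> Q k) -> min_nat P = min_nat Q.
Proof.
by move=> PQ; congr min_nat; apply: funext => k; apply: propext.
Qed.

Theorem theorem2 (T : finType) (g : rel T) :
  simple_graph g -> connected_graph g -> geodetic g ->
  (exists x y : T, g x y) ->
  src g = chi_H g /\
  (forall f : {set T} -> nat,
     strongly_rainbow_connects g f <-> proper_H g f).
Proof.
move=> _ _ geo _.
split; last exact: strongly_rainbow_connectsE.
apply: eq_min_nat => k.
by split=> -[f [f_coloring f_ok]]; exists f; split=> //;
  apply/(strongly_rainbow_connectsE geo).
Qed.
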